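(* Let $\mathcal M=(f,aN)$ be a tight polymatroid, where $a\notin N$, and let $\alpha_1,\alpha_2\ge0$ with $\alpha_1+\alpha_2=f(a)$. Let $\mathcal N=(g,a_1a_2N)$ be the polymatroid that splits $a$ in $\mathcal M$ with parameters $\alpha_1,\alpha_2$, i.e. for all $A\subseteq N$: $g(A)=f(A)$, $g(a_1a_2A)=f(aA)$, and $g(a_iA)=\min\{f(A)+\alpha_i,\,f(aA)\}$ for $i=1,2$. Then the dual $\mathcal N^\perp=(g^\perp,a_1a_2N)$ splits $a$ in $\mathcal M^\perp=(f^\perp,aN)$ with the same parameters: for all $A\subseteq N$, $g^\perp(A)=f^\perp(A)$, $g^\perp(a_1a_2A)=f^\perp(aA)$, and $g^\perp(a_iA)=\min\{f^\perp(A)+\alpha_i,\,f^\perp(aA)\}$ for $i=1,2$; moreover $f^\perp(a)=f(a)=\alpha_1+\alpha_2$.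
   Context: A polymatroid $(f,M)$ consists of a finite set $M$ and a function $f$ on subsets of $M$ with $f(\emptyset)=0$ that is non-negative, monotone and submodular. It is tight if $f(M)=f(M\setminus\{i\})$ for all $i\in M$. The dual of $(f,M)$ is $(f^\perp,M)$ with $f^\perp(A)=f(M\setminus A)+\sum_{i\in A}f(i)-f(M)$. Juxtaposition denotes union, e.g. $aN=\{a\}\cup N$. *)

From HB Require Import structures.
From mathcomp Require Import all_boot all_order all_algebra.
Set Implicit Arguments. Unset Strict Implicit. Unset Printing Implicit Defensive.
Import Order.TTheory GRing.Theory Num.Theory.
Local Open Scope ring_scope.

Section Poly.
Variables (R : realFieldType) (U : finType).

Definition polymatroid (f : {set U} -> R) : Prop :=
  [/\ f set0 = 0,
      (forall A, 0 <= f A),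
      (forall A B : {set U}, A \subset B -> f A <= f B) &
      (forall A B : {set U}, f (A :|: B) + f (A :&: B) <= f A + f B)].

Definition tight (f : {set U} -> R) : Prop :=
  forall i : U, f [set: U] = f ([set: U] :\ i).

Definition pdual (f : {set U} -> R) (A : {set U}) : R :=
  f (~: A) + \sum_(i in A) f [set i] - f [set: U].
End Poly.

(* Ground set aN is modelled as option T, with a = None and N = Some @: T.
   Ground set a1a2N is modelled as bool + T, with a1 = inl true,
   a2 = inl false and N = inr @: T. *)
Definition embM (T : finType) (A : {set T}) : {set option T} := Some @: A.
Definition embN (T : finType) (A : {set T}) : {set bool + T} := inr @: A.
Definition ea : forall T : finType, option T := fun T => None.
Definition ea1 : forall T : finType, (bool + T)%type := fun T => inl true.
Definition ea2 : forall T : finType, (bool + T)%type := fun T => inl false.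

Definition splits (R : realFieldType) (T : finType)
    (f : {set option T} -> R) (g : {set bool + T} -> R) (al1 al2 : R) : Prop :=
  forall A : {set T},
    [/\ g (embN A) = f (embM A),
        g (ea1 T |: (ea2 T |: embN A)) = f (ea T |: embM A),
        g (ea1 T |: embN A) = Num.min (f (embM A) + al1) (f (ea T |: embM A)) &
        g (ea2 T |: embN A) = Num.min (f (embM A) + al2) (f (ea T |: embM A))].

From HB Require Import structures.
From mathcomp Require Import all_boot all_order all_algebra.
From mathcomp Require Import ring.
Import Order.TTheory GRing.Theory Num.Theory.
Local Open Scope ring_scope.

(* Complementation exchanges [a1 A] with [a2 (N \ A)], so the dual of the
   split polymatroid evaluates at [a_i A] to
   [min (f(B) + a_j, f(aB)) + a_i + c = min (f^perp(aA), f^perp(A) + a_i)]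
   with [B = N \ A] and [c] the modular correction of the dual; the two
   agree because [a_1 + a_2 = f(a)], which is also [f^perp(a)] by tightness. *)

Lemma pdual_set1_tight (R : realFieldType) (U : finType) (f : {set U} -> R)
    (i : U) :
  tight f -> pdual f [set i] = f [set i].
Proof.
move=> tight_f; rewrite /pdual big_set1 -setTD -tight_f.
by rewrite addrC addKr.
Qed.

Section Embeddings.
Variable T : finType.

Lemma mem_embN (A : {set T}) x : (inr x \in embN A) = (x \in A).
Proof. by rewrite /embN mem_imset // => u v [->]. Qed.

Lemma notin_embN (A : {set T}) b : (inl b \in embN A) = false.
Proof. by apply/imsetP => -[y _]. Qed.

Lemma mem_embM (A : {set T}) x : (Some x \in embM A) = (x \in A).
Proof. by rewrite /embM mem_imset // => u v [->]. Qed.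

Lemma notin_embM (A : {set T}) : (None \in embM A) = false.
Proof. by apply/imsetP => -[y _]. Qed.

Ltac sum_sets := apply/setP => -[[]|x];
  rewrite !inE ?notin_embN ?mem_embN ?inE.
Ltac option_sets := apply/setP => -[x|];
  rewrite !inE ?notin_embM ?mem_embM ?inE.

Lemma setC_embN (A : {set T}) :
  ~: embN A = ea1 T |: (ea2 T |: embN (~: A)).
Proof. by sum_sets. Qed.

Lemma setC_a1_embN (A : {set T}) :
  ~: (ea1 T |: embN A) = ea2 T |: embN (~: A).
Proof. by sum_sets. Qed.

Lemma setC_a2_embN (A : {set T}) :
  ~: (ea2 T |: embN A) = ea1 T |: embN (~: A).
Proof. by sum_sets. Qed.

Lemma setC_a12_embN (A : {set T}) :
  ~: (ea1 T |: (ea2 T |: embN A)) = embN (~: A).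
Proof. by sum_sets. Qed.

Lemma setT_embN : [set: bool + T] = ea1 T |: (ea2 T |: embN setT).
Proof. by sum_sets. Qed.

Lemma setC_embM (A : {set T}) : ~: embM A = ea T |: embM (~: A).
Proof. by option_sets. Qed.

Lemma setC_a_embM (A : {set T}) : ~: (ea T |: embM A) = embM (~: A).
Proof. by option_sets. Qed.

Lemma setT_embM : [set: option T] = ea T |: embM setT.
Proof. by option_sets. Qed.

Lemma embM0 : embM (set0 : {set T}) = set0.
Proof. exact: imset0. Qed.

Lemma embN0 : embN (set0 : {set T}) = set0.
Proof. exact: imset0. Qed.

Lemma big_embN (R : realFieldType) (F : bool + T -> R) (A : {set T}) :
  \sum_(i in embN A) F i = \sum_(x in A) F (inr x).
Proof. by rewrite big_imset // => u v _ _ [->]. Qed.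

Lemma big_embM (R : realFieldType) (F : option T -> R) (A : {set T}) :
  \sum_(i in embM A) F i = \sum_(x in A) F (Some x).
Proof. by rewrite big_imset // => u v _ _ [->]. Qed.

End Embeddings.

Section SplitDual.
Variables (R : realFieldType) (T : finType).
Variables (f : {set option T} -> R) (g : {set bool + T} -> R) (al1 al2 : R).
Hypotheses (f0 : f set0 = 0) (al1_ge0 : 0 <= al1) (al2_ge0 : 0 <= al2).
Hypotheses (al12 : al1 + al2 = f [set ea T]) (split_fg : splits f g al1 al2).

Let S (A : {set T}) := \sum_(i in embM A) f [set i].
Let c (A : {set T}) := S A - f [set: option T].

Lemma split_setT : g [set: bool + T] = f [set: option T].
Proof. by have [_ + _ _] := split_fg setT; rewrite -setT_embN -setT_embM. Qed.

Lemma split_a1 : g [set ea1 T] = al1.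
Proof.
have [_ _ + _] := split_fg set0; rewrite embN0 embM0 !setU0 f0 add0r => ->.
by apply/min_idPl; rewrite -al12 lerDl.
Qed.

Lemma split_a2 : g [set ea2 T] = al2.
Proof.
have [_ _ _ +] := split_fg set0; rewrite embN0 embM0 !setU0 f0 add0r => ->.
by apply/min_idPl; rewrite -al12 lerDr.
Qed.

Lemma split_sum_set1 (A : {set T}) :
  \sum_(i in embN A) g [set i] = S A.
Proof.
rewrite big_embN /S big_embM; apply: eq_bigr => x _.
by have [+ _ _ _] := split_fg [set x]; rewrite /embN /embM !imset_set1.
Qed.

Lemma pdual_embM (A : {set T}) :
  pdual f (embM A) = f (ea T |: embM (~: A)) + c A.
Proof. by rewrite /pdual setC_embM /c /S; ring. Qed.

Lemma pdual_a_embM (A : {set T}) :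
  pdual f (ea T |: embM A) = f (embM (~: A)) + (al1 + al2) + c A.
Proof.
rewrite /pdual setC_a_embM big_setU1 ?notin_embM //= al12 /c /S; ring.
Qed.

Lemma pdual_embN (A : {set T}) :
  pdual g (embN A) = f (ea T |: embM (~: A)) + c A.
Proof.
rewrite /pdual setC_embN; have [_ -> _ _] := split_fg (~: A).
by rewrite split_setT split_sum_set1 /c; ring.
Qed.

Lemma pdual_a12_embN (A : {set T}) :
  pdual g (ea1 T |: (ea2 T |: embN A)) = f (embM (~: A)) + (al1 + al2) + c A.
Proof.
rewrite /pdual setC_a12_embN; have [-> _ _ _] := split_fg (~: A).
rewrite split_setT !big_setU1 ?inE ?notin_embN //= split_sum_set1 split_a1 split_a2 /c.
ring.
Qed.

Lemma pdual_a1_embN (A : {set T}) :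
  pdual g (ea1 T |: embN A) =
  Num.min (f (embM (~: A)) + al2) (f (ea T |: embM (~: A))) + al1 + c A.
Proof.
rewrite /pdual setC_a1_embN; have [_ _ _ ->] := split_fg (~: A).
by rewrite split_setT big_setU1 ?notin_embN //= split_sum_set1 split_a1 /c; ring.
Qed.

Lemma pdual_a2_embN (A : {set T}) :
  pdual g (ea2 T |: embN A) =
  Num.min (f (embM (~: A)) + al1) (f (ea T |: embM (~: A))) + al2 + c A.
Proof.
rewrite /pdual setC_a2_embN; have [_ _ -> _] := split_fg (~: A).
by rewrite split_setT big_setU1 ?notin_embN //= split_sum_set1 split_a2 /c; ring.
Qed.

Lemma splits_pdual : splits (pdual f) (pdual g) al1 al2.
Proof.
move=> A; rewrite pdual_embN pdual_a12_embN pdual_a1_embN pdual_a2_embN.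
rewrite pdual_embM pdual_a_embM !addr_minl.
by split=> //; rewrite minC; congr Num.min; ring.
Qed.

End SplitDual.

Theorem lemma2p11 (R : realFieldType) (T : finType)
    (f : {set option T} -> R) (g : {set bool + T} -> R) (al1 al2 : R) :
  polymatroid f -> tight f ->
  0 <= al1 -> 0 <= al2 -> al1 + al2 = f [set ea T] ->
  polymatroid g -> splits f g al1 al2 ->
  splits (pdual f) (pdual g) al1 al2 /\
  pdual f [set ea T] = f [set ea T] /\ f [set ea T] = al1 + al2.
Proof.
move=> [f0 _ _ _] tight_f al1_ge0 al2_ge0 al12 _ split_fg.
split; first exact: splits_pdual.
by split; [exact: pdual_set1_tight | rewrite al12].
Qed.
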